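(* Consider the structure $X^n\xrightarrow{\overline{\mathcal F}}V^n\xrightarrow{\mathcal G^n}A^n$ with loss $l\colon Y\times A\to[0,M]$, and let $\vec P=P_1\times\dots\times P_n\in\mathcal P_{l_{\mathcal G^n\circ\overline{\mathcal F}}}$ be a product probability measure on $Z^n$. Then for all $f,f'\in\mathcal F$, $$d_{[\vec P,l_{\mathcal G^n}]}(\bar f,\bar f')\le d^*_{[\bar P,l_{\mathcal G}]}(f,f'),$$ where $\bar P=\frac1n\sum_{i=1}^n P_i$.
   Context: $Z=X\times Y$; $\mathcal F$ maps $X\to V$, $\mathcal G$ maps $V\to A$; $\bar f=(f,\dots,f)$ acting componentwise on $X^n$; $\mathcal G^n$ the $n$-tuples $\vec g=(g_1,\dots,g_n)$ acting componentwise. $l_{\vec g\circ\bar f}\colon Z^n\to[0,M]$, $((x_1,y_1),\dots,(x_n,y_n))\mapsto\frac1n\sum_i l(y_i,g_i(f(x_i)))$; $l_{\mathcal G^n\circ\overline{\mathcal F}}$ the set of these; $\mathcal P_{\mathcal K}$ denotes probability measures on the $\sigma$-algebra generated by inverse images of open balls under the functions in $\mathcal K$. $l_{g\circ f}(x,y)=l(y,g(f(x)))$. $d_{[\vec P,l_{\mathcal G^n}]}(\bar f,\bar f')=\sup_{\vec g\in\mathcal G^n}\int_{Z^n}|l_{\vec g\circ\bar f}-l_{\vec g\circ\bar f'}|\,d\vec P$ and $d^*_{[P,l_{\mathcal G}]}(f,f')=\int_Z\sup_{g\in\mathcal G}|l_{g\circ f}(z)-l_{g\circ f'}(z)|\,dP(z)$.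 *)

From HB Require Import structures.
From mathcomp Require Import all_boot all_order all_algebra.
From mathcomp Require Import all_classical all_reals all_analysis.
From mathcomp Require Import measurable_realfun.
Set Implicit Arguments. Unset Strict Implicit. Unset Printing Implicit Defensive.
Import Order.TTheory GRing.Theory Num.Theory.
Import numFieldNormedType.Exports.
Local Open Scope classical_set_scope.
Local Open Scope ring_scope.

(* Z = X * Y, Z^n = n.-tuple Z (with the product
   sigma-algebra generated by the coordinate projections, library instance). *)

Section defs.
Context {R : realType} {dX dY : measure_display}
  {X : measurableType dX} {Y : measurableType dY} {V A : Type}.

Definition loss_comp (l : Y -> A -> R) (g : V -> A) (f : X -> V) : X * Y -> R :=
  fun z => l z.2 (g (f z.1)).

Definition loss_comp_n (n : nat) (l : Y -> A -> R) (gs : 'I_n -> V -> A)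
  (f : X -> V) : n.-tuple (X * Y) -> R :=
  fun zs => n%:R^-1 * \sum_(i < n) loss_comp l (gs i) f (tnth zs i).

(* Q is the product measure P_1 x ... x P_n: it agrees with the product
   on measurable rectangles (which determines it uniquely). *)
Definition is_product_prob (n : nat) (P : 'I_n -> probability (X * Y)%type R)
  (Q : probability (n.-tuple (X * Y)) R) : Prop :=
  forall B : 'I_n -> set (X * Y), (forall i, measurable (B i)) ->
    Q [set zs | forall i, B i (tnth zs i)] = (\prod_(i < n) P i (B i))%E.

Definition is_average_prob (n : nat) (P : 'I_n -> probability (X * Y)%type R)
  (Pbar : probability (X * Y)%type R) : Prop :=
  forall B : set (X * Y), measurable B ->
    Pbar B = ((n%:R^-1)%:E * \sum_(i < n) P i B)%E.

Definition d_vec (n : nat) (l : Y -> A -> R) (G : set (V -> A))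
  (Q : probability (n.-tuple (X * Y)) R) (f f' : X -> V) : \bar R :=
  ereal_sup [set (\int[Q]_zs
                    (`|loss_comp_n l gs f zs - loss_comp_n l gs f' zs|)%:E)%E
            | gs in [set gs : 'I_n -> V -> A | forall i, G (gs i)]].

Definition sup_loss_diff (l : Y -> A -> R) (G : set (V -> A)) (f f' : X -> V)
  : X * Y -> \bar R :=
  fun z => ereal_sup [set (`|loss_comp l g f z - loss_comp l g f' z|)%:E
                     | g in G].

Definition d_star (l : Y -> A -> R) (G : set (V -> A))
  (P : probability (X * Y)%type R) (f f' : X -> V) : \bar R :=
  (\int[P]_z sup_loss_diff l G f f' z)%E.

End defs.

From HB Require Import structures.
From mathcomp Require Import all_boot all_order all_algebra.
From mathcomp Require Import all_classical all_reals all_analysis.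
From mathcomp Require Import measurable_realfun.
Set Implicit Arguments. Unset Strict Implicit. Unset Printing Implicit Defensive.
Import Order.TTheory GRing.Theory Num.Theory.
Local Open Scope classical_set_scope.
Local Open Scope ring_scope.

(* The triangle inequality bounds the loss gap of the averaged predictor pointwise
   by the average of the coordinatewise suprema [S (z_i)], with
   [S := sup_loss_diff l G f f'].  Integrating a function of the i-th coordinate
   against the product measure only sees the marginal [P_i], so the integral of
   this average is [1/n sum_i int S dP_i = int S dPbar], uniformly in [gs]. *)

Section product_and_average.
Context {R : realType} {dX dY : measure_display}
  {X : measurableType dX} {Y : measurableType dY}.
Variables (n : nat) (P : 'I_n -> probability (X * Y)%type R).

Lemma product_prob_tnth_preimage (Q : probability (n.-tuple (X * Y)) R)
    (i : 'I_n) (B : set (X * Y)) :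
  is_product_prob P Q -> measurable B ->
  Q ((fun zs : n.-tuple (X * Y) => tnth zs i) @^-1` B) = P i B.
Proof.
move=> hQ mB.
have -> : (fun zs : n.-tuple (X * Y) => tnth zs i) @^-1` B =
    [set zs | forall j, (if j == i then B else setT) (tnth zs j)].
  apply/seteqP; split => zs /=; last by move/(_ i); rewrite eqxx.
  by move=> Bz j; case: eqP => // ->.
rewrite (hQ (fun j => if j == i then B else setT)); last by move=> j; case: eqP.
rewrite (bigD1 i) //= eqxx big1 ?mule1 // => j /negbTE ->.
exact: probability_setT.
Qed.

Lemma ge0_integral_product_prob_tnth (Q : probability (n.-tuple (X * Y)) R)
    (i : 'I_n) (h : X * Y -> \bar R) :
  is_product_prob P Q -> measurable_fun setT h -> (forall z, 0 <= h z)%E ->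
  (\int[Q]_zs h (tnth zs i) = \int[P i]_z h z)%E.
Proof.
move=> hQ mh h0.
have mt := @measurable_tnth _ (X * Y)%type n i.
have := ge0_integral_pushforward mt Q measurableT mh (fun z _ => h0 z).
rewrite preimage_setT => <-.
apply: eq_measure_integral => B mB _.
exact: product_prob_tnth_preimage.
Qed.

Lemma ge0_integral_average_prob (Pbar : probability (X * Y)%type R)
    (h : X * Y -> \bar R) :
  (0 < n)%N -> is_average_prob P Pbar ->
  measurable_fun setT h -> (forall z, 0 <= h z)%E ->
  (\int[Pbar]_z h z = (n%:R^-1)%:E * \sum_(i < n) \int[P i]_z h z)%E.
Proof.
case: n P => [//|m] P' _ hP mh h0.
pose mu : {measure set (X * Y) -> \bar R}^nat := fun k => P' (inord k).
have k0 : (0 <= m.+1%:R^-1 :> R) by rewrite invr_ge0.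
pose k : {nonneg R} := NngNum k0.
transitivity (\int[mscale k (msum mu m.+1)]_z h z)%E.
  apply: eq_measure_integral => B mB _.
  rewrite [LHS]hP //=; congr (_ * _)%E.
  by apply: eq_bigr => i _; rewrite /mu inord_val.
rewrite ge0_integral_mscale // ge0_integral_measure_sum //; congr (_ * _)%E.
by apply: eq_bigr => i _; rewrite /mu inord_val.
Qed.

Lemma ge0_integral_product_prob_mean (Q : probability (n.-tuple (X * Y)) R)
    (Pbar : probability (X * Y)%type R) (h : X * Y -> \bar R) :
  (0 < n)%N -> is_product_prob P Q -> is_average_prob P Pbar ->
  measurable_fun setT h -> (forall z, 0 <= h z)%E ->
  (\int[Q]_zs ((n%:R^-1)%:E * \sum_(i < n) h (tnth zs i)) =
   \int[Pbar]_z h z)%E.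
Proof.
move=> n0 hQ hP mh h0.
have mht i : measurable_fun setT (fun zs : n.-tuple (X * Y) => h (tnth zs i)).
  exact: measurableT_comp mh (measurable_tnth i).
rewrite ge0_integralZl ?lee_fin ?invr_ge0 //; last 2 first.
- exact: emeasurable_sum.
- by move=> zs _; apply: sume_ge0.
rewrite ge0_integral_sum // (ge0_integral_average_prob n0 hP mh h0).
by congr (_ * _)%E; apply: eq_bigr => i _; exact: ge0_integral_product_prob_tnth.
Qed.

End product_and_average.

Section loss_gap.
Context {R : realType} {dX dY : measure_display}
  {X : measurableType dX} {Y : measurableType dY} {V A : Type}.
Variables (l : Y -> A -> R) (G : set (V -> A)) (f f' : X -> V).

Lemma sup_loss_diff_ge0 (g : V -> A) :
  G g -> forall z, (0 <= sup_loss_diff l G f f' z)%E.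
Proof.
move=> Gg z; apply: (@le_trans _ _ (`|loss_comp l g f z - loss_comp l g f' z|)%:E).
  by rewrite lee_fin.
by apply: ereal_sup_ubound; exists g.
Qed.

Lemma measurable_loss_comp_n (n : nat) (gs : 'I_n -> V -> A) (h : X -> V) :
  (forall i, measurable_fun setT (loss_comp l (gs i) h)) ->
  measurable_fun setT (loss_comp_n l gs h).
Proof.
move=> mL; apply: measurable_funM => //; apply: measurable_sum => i.
exact: measurableT_comp (mL i) (measurable_tnth i).
Qed.

Lemma loss_comp_n_gap_le (n : nat) (gs : 'I_n -> V -> A)
    (zs : n.-tuple (X * Y)) :
  (forall i, G (gs i)) ->
  ((`|loss_comp_n l gs f zs - loss_comp_n l gs f' zs|)%:E <=
   (n%:R^-1)%:E * \sum_(i < n) sup_loss_diff l G f f' (tnth zs i))%E.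
Proof.
move=> Ggs; rewrite /loss_comp_n -mulrBr normrM ger0_norm ?invr_ge0 // EFinM.
apply: lee_wpmul2l; first by rewrite lee_fin invr_ge0.
rewrite -sumrB.
apply: (@le_trans _ _ (\sum_(i < n)
  (`|loss_comp l (gs i) f (tnth zs i) - loss_comp l (gs i) f' (tnth zs i)|)%:E)%E).
  by rewrite sumEFin lee_fin ler_norm_sum.
by apply: lee_sum => i _; apply: ereal_sup_ubound; exists (gs i).
Qed.

End loss_gap.

Theorem lemmaC16 (R : realType) (dX dY : measure_display)
  (X : measurableType dX) (Y : measurableType dY) (V A : Type)
  (F : set (X -> V)) (G : set (V -> A)) (l : Y -> A -> R) (M : R)
  (n : nat) (P : 'I_n -> probability (X * Y)%type R)
  (Q : probability (n.-tuple (X * Y)) R) (Pbar : probability (X * Y)%type R) :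
  (0 < n)%N ->
  (forall y a, 0 <= l y a <= M) ->
  (forall f g, F f -> G g -> measurable_fun [set: X * Y] (loss_comp l g f)) ->
  is_product_prob P Q ->
  is_average_prob P Pbar ->
  forall f f', F f -> F f' ->
    measurable_fun [set: X * Y] (sup_loss_diff l G f f') ->
    (d_vec l G Q f f' <= d_star l G Pbar f f')%E.
Proof.
move=> n0 _ mL hQ hP f f' Ff Ff' mS.
apply: ge_ereal_sup => _ [gs Ggs <-].
have S0 := sup_loss_diff_ge0 l f f' (Ggs (Ordinal n0)).
rewrite /d_star -(ge0_integral_product_prob_mean n0 hQ hP mS S0).
apply: ge0_le_integral => //.
- apply/measurable_EFinP; apply: measurableT_comp => //.
  by apply: measurable_funB; apply: measurable_loss_comp_n => i; exact: mL.
- apply: measurable_funeM; apply: emeasurable_sum => i.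
  exact: measurableT_comp mS (measurable_tnth i).
- by move=> zs _; exact: loss_comp_n_gap_le.
Qed.
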